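(* Let $n,m,k$ be positive integers and let $\varphi$ be an automorphism of $\Gamma=\mathbb{Z}_{nm}\mathbin{\mathrm{wr}}\mathbb{Z}^k$. Let $\varphi_n$ and $\varphi_m$ be the automorphisms of $\mathbb{Z}_n\mathbin{\mathrm{wr}}\mathbb{Z}^k$ and $\mathbb{Z}_m\mathbin{\mathrm{wr}}\mathbb{Z}^k$ determined by $\Pi_n\circ\varphi=\varphi_n\circ\Pi_n$ and $\Pi_m\circ\varphi=\varphi_m\circ\Pi_m$. If $R(\varphi_n')=R(\varphi_m')=1$, then $R(\varphi')=1$.
   Context: $\mathbb{Z}_q\mathbin{\mathrm{wr}}\mathbb{Z}^k=\bigoplus_{x\in\mathbb{Z}^k}(\mathbb{Z}_q)_x\rtimes_\alpha\mathbb{Z}^k$ is the restricted wreath product, $\alpha(z)$ mapping $(\mathbb{Z}_q)_x$ onto $(\mathbb{Z}_q)_{z+x}$; its torsion subgroup $\Sigma_q=\bigoplus_x(\mathbb{Z}_q)_x$ is characteristic, and for an automorphism $\psi$, $\psi'$ denotes the restriction of $\psi$ to the torsion subgroup. For $d\mid nm$, $\Pi_d\colon\mathbb{Z}_{nm}\mathbin{\mathrm{wr}}\mathbb{Z}^k\to\mathbb{Z}_d\mathbin{\mathrm{wr}}\mathbb{Z}^k$ is $\Pi_d(\sigma,z)=(\pi_d(\sigma),z)$, where $\pi_d$ reduces every coefficient mod $d$; its kernel is characteristic, so $\varphi_d$ is well defined. $R(\psi)$ denotes the Reidemeister number: the number of classes of the relation $g_1\sim hg_2\psi(h^{-1})$;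 for the abelian group $\Sigma$, $R(\varphi')=1$ means $1-\varphi'$ is surjective. *)

From HB Require Import structures.
From mathcomp Require Import all_boot all_order all_algebra.
Set Implicit Arguments. Unset Strict Implicit. Unset Printing Implicit Defensive.
Import Order.TTheory GRing.Theory Num.Theory.
Local Open Scope ring_scope.

(* Z_q for q > 0: the ordinals 'I_q, written 'I_(q.-1).+1 so that the
   canonical zmodType structure of Zp applies (also for q = 1, trivial group). *)
Notation Zmod q := 'I_(q.-1).+1.

Notation Zk k := 'rV[int]_k.

(* Carrier for Z_q wr Z^k : pairs (sigma, z) with sigma : Z^k -> Z_q;
   the group itself is the subset of pairs with sigma finitely supported. *)
Definition wr (q k : nat) : Type := ((Zk k -> Zmod q) * Zk k)%type.

Definition fin_supp (q k : nat) (s : Zk k -> Zmod q) : Prop :=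
  exists r : seq (Zk k), forall x, s x != 0 -> x \in r.

Definition inW (q k : nat) (g : wr q k) : Prop := fin_supp g.1.

Definition inSigma (q k : nat) (g : wr q k) : Prop := inW g /\ g.2 = 0.

(* alpha(z) maps (Z_q)_x onto (Z_q)_(z+x): (alpha(z) s)(y) = s(y - z) *)
Definition wmul (q k : nat) (g h : wr q k) : wr q k :=
  (fun x => g.1 x + h.1 (x - g.2), g.2 + h.2).
Definition wone (q k : nat) : wr q k := (fun _ => 0, 0).
Definition winv (q k : nat) (g : wr q k) : wr q k :=
  (fun x => - g.1 (x + g.2), - g.2).

Definition is_aut (q k : nat) (phi : wr q k -> wr q k) : Prop :=
  [/\ (forall g, inW g -> inW (phi g)),
      (forall g h, inW g -> inW h -> phi (wmul g h) = wmul (phi g) (phi h)),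
      (forall g h, inW g -> inW h -> phi g = phi h -> g = h) &
      (forall g', inW g' -> exists2 g, inW g & phi g = g')].

Definition redmod (q d : nat) (a : Zmod q) : Zmod d := inZp (nat_of_ord a).

Definition proj (q d k : nat) (g : wr q k) : wr d k :=
  (fun x => redmod d (g.1 x), g.2).

(* R(phi') = 1 : the restriction phi' of phi to Sigma_q has exactly one
   Reidemeister class, i.e. any two elements of Sigma_q are twisted-conjugate
   via some h in Sigma_q  (g1 ~ h g2 phi(h)^-1). *)
Definition reid_one (q k : nat) (phi : wr q k -> wr q k) : Prop :=
  forall g1 g2, inSigma g1 -> inSigma g2 ->
    exists2 h, inSigma h & g1 = wmul (wmul h g2) (winv (phi h)).

(* On the torsion subgroup phi' is additive, and R(phi') = 1 says that 1 - phi' is onto.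
   Given s in Sigma_nm, surjectivity of 1 - phi_m' yields a such that s - (1 - phi')(a) is
   divisible by m, say equal to m y; surjectivity of 1 - phi_n' yields b such that
   y - (1 - phi')(b) is divisible by n.  Multiplication by m kills n Sigma_nm, hence
   s = (1 - phi')(a + m b). *)

From HB Require Import structures.
From mathcomp Require Import all_boot all_order all_algebra.
From Stdlib Require Import FunctionalExtensionality.
Set Implicit Arguments. Unset Strict Implicit. Unset Printing Implicit Defensive.
Import Order.TTheory GRing.Theory Num.Theory.
Local Open Scope ring_scope.

Section ZmodArith.

Variables q d : nat.
Hypotheses (q_gt0 : (0 < q)%N) (d_dvd_q : (d %| q)%N).

Let d_gt0 : (0 < d)%N. Proof. exact: dvdn_gt0 d_dvd_q. Qed.

Lemma Zmod_val_inZp x : nat_of_ord (inZp x : Zmod q) = (x %% q)%N.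
Proof. by case: q q_gt0. Qed.

Lemma Zmod_valMn (a : Zmod q) N : nat_of_ord (a *+ N) = ((a * N) %% q)%N.
Proof. by case: q q_gt0 a => // p _ a; rewrite Zp_mulrn. Qed.

Lemma Zmod_val_lt (a : Zmod q) : (a < q)%N.
Proof. by case: q q_gt0 a. Qed.

Lemma Zmod_mulrn_order (a : Zmod q) : a *+ q = 0.
Proof. by apply: val_inj => /=; rewrite Zmod_valMn modnMl; case: q q_gt0. Qed.

Lemma redmod0 : redmod d (0 : Zmod q) = 0.
Proof. by apply: val_inj; rewrite /= mod0n. Qed.

Lemma redmodD (a b : Zmod q) : redmod d (a + b) = redmod d a + redmod d b.
Proof.
case: q q_gt0 d_dvd_q a b => // p _; case: d d_gt0 => // e _ dvd_ep a b.
by apply: val_inj; rewrite /= modnDm (modn_dvdm _ dvd_ep).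
Qed.

Lemma redmodB (a b : Zmod q) : redmod d (a - b) = redmod d a - redmod d b.
Proof. by apply: (addIr (redmod d b)); rewrite -redmodD !subrK. Qed.

Lemma redmod_inZp (v : Zmod d) : redmod d (inZp v : Zmod q) = v.
Proof.
have le_dq : (d <= q)%N by exact: dvdn_leq.
case: q q_gt0 le_dq => // p _; case: d d_gt0 v => // e _ v le_ep.
by apply: val_inj; rewrite /= (modn_small (leq_trans (ltn_ord v) le_ep)) modn_small.
Qed.

Lemma redmod_eq0 (a : Zmod q) : (redmod d a == 0) = (d %| a)%N.
Proof. by case: d d_gt0 => // e _; rewrite -val_eqE /dvdn. Qed.

End ZmodArith.

Section ZmodProduct.

Variables n m : nat.
Hypotheses (n_gt0 : (0 < n)%N) (m_gt0 : (0 < m)%N).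

Let nm_gt0 : (0 < n * m)%N. Proof. by rewrite muln_gt0 n_gt0. Qed.

Lemma Zmod_divnK (w : Zmod (n * m)) :
  (m %| w)%N -> (inZp (w %/ m) : Zmod (n * m)) *+ m = w.
Proof.
move=> dvd_mw; apply: val_inj => /=.
rewrite Zmod_valMn // Zmod_val_inZp // modnMml divnK //.
exact: modn_small (Zmod_val_lt nm_gt0 w).
Qed.

Lemma Zmod_mulrn_eq0 (v : Zmod (n * m)) : (n %| v)%N -> v *+ m = 0.
Proof.
move=> /dvdnP [t def_v]; apply: val_inj => /=.
by rewrite Zmod_valMn // def_v -mulnA modnMl; case: (n * m)%N nm_gt0.
Qed.

End ZmodProduct.

Section Wreath.

Variables q k : nat.
Implicit Types (s t : Zk k -> Zmod q) (g h : wr q k).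

Lemma fin_supp_comp q' (f : Zmod q -> Zmod q') s :
  f 0 = 0 -> fin_supp s -> fin_supp (f \o s).
Proof.
move=> f0 [r supp_r]; exists r => x /=.
by case: (eqVneq (s x) 0) => [-> | /supp_r //]; rewrite f0 eqxx.
Qed.

Lemma fin_suppD s t : fin_supp s -> fin_supp t -> fin_supp (s \+ t).
Proof.
move=> [r supp_r] [r' supp_r']; exists (r ++ r') => x /=; rewrite mem_cat.
case: (eqVneq (s x) 0) => [-> | /supp_r -> //]; rewrite add0r => /supp_r' ->.
by rewrite orbT.
Qed.

Lemma fin_suppN s : fin_supp s -> fin_supp (\- s).
Proof. exact: (fin_supp_comp (@oppr0 _)). Qed.

Lemma fin_suppB s t : fin_supp s -> fin_supp t -> fin_supp (s \- t).
Proof. by move=> fs ft; apply: fin_suppD (fin_suppN ft). Qed.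

Lemma inW_wone : inW (wone q k).
Proof. by exists [::]. Qed.

Lemma inW_wmul g h : inW g -> inW h -> inW (wmul g h).
Proof.
move=> [r supp_r] [r' supp_r']; exists (r ++ map (+%R^~ g.2) r') => x /=.
rewrite mem_cat; case: (eqVneq (g.1 x) 0) => [-> | /supp_r -> //].
rewrite add0r => /supp_r' r'x; apply/orP; right.
by rewrite -(subrK g.2 x); apply: map_f.
Qed.

Definition wexp g N := iter N (wmul g) (wone q k).

Lemma inW_wexp g N : inW g -> inW (wexp g N).
Proof. by move=> Wg; elim: N => [|N IH] /=; [exact: inW_wone | exact: inW_wmul]. Qed.

Lemma wexp_snd g N : (wexp g N).2 = g.2 *+ N.
Proof. by elim: N => [|N IH] //=; rewrite IH mulrS. Qed.

Definition tor s : wr q k := (s, 0).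

Lemma inSigmaE g : inSigma g -> g = tor g.1.
Proof. by case: g => s z [_ /= ->]. Qed.

Lemma inSigma_tor s : inSigma (tor s) <-> fin_supp s.
Proof. by split=> [[]|]. Qed.

Lemma tor_inj : injective tor.
Proof. by move=> s t []. Qed.

Lemma wmul_tor s t : wmul (tor s) (tor t) = tor (s \+ t).
Proof.
rewrite /wmul /= addr0; congr pair.
by apply: functional_extensionality => x; rewrite subr0.
Qed.

Lemma winv_tor s : winv (tor s) = tor (\- s).
Proof.
rewrite /winv /= oppr0; congr pair.
by apply: functional_extensionality => x; rewrite addr0.
Qed.

Lemma wexp_tor s N : wexp (tor s) N = tor (fun x => s x *+ N).
Proof.
elim: N => [|N IH] /=; first by congr pair; apply: functional_extensionality.
by rewrite IH wmul_tor; congr pair; apply: functional_extensionality => x; rewrite mulrS.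
Qed.

End Wreath.

Lemma wmulg1 q k (g : wr q k) : wmul g (wone q k) = g.
Proof.
case: g => s z; rewrite /wmul /= addr0; congr pair.
by apply: functional_extensionality => x; rewrite addr0.
Qed.

Lemma wmul_idem q k (g : wr q k) : wmul g g = g -> g = wone q k.
Proof.
case: g => s z [s_idem z_idem].
have z0 : z = 0 by apply: (addrI z); rewrite addr0.
rewrite /wone z0; congr pair; apply: functional_extensionality => x.
by apply: (addrI (s x)); rewrite addr0 -[in RHS](congr1 (@^~ x) s_idem) z0 subr0.
Qed.

Section Automorphism.

Variables (q k : nat) (phi : wr q k -> wr q k).
Hypotheses (q_gt0 : (0 < q)%N) (phi_aut : is_aut phi).
Implicit Types (s t : Zk k -> Zmod q) (g h : wr q k).

Lemma aut_wone : phi (wone q k) = wone q k.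
Proof.
case: phi_aut => _ phiM _ _; apply: wmul_idem.
by rewrite -phiM ?(wmulg1 (wone q k)) //; apply: inW_wone.
Qed.

Lemma aut_wexp g N : inW g -> phi (wexp g N) = wexp (phi g) N.
Proof.
case: phi_aut => _ phiM _ _ Wg; elim: N => [|N IH] /=; first exact: aut_wone.
by rewrite phiM ?IH //; apply: inW_wexp.
Qed.

Lemma aut_inSigma g : inSigma g -> inSigma (phi g).
Proof.
move=> Sg; split; first by case: phi_aut => phiW _ _ _; apply: phiW; case: Sg.
have wexp_order : wexp g q = wone q k.
  rewrite (inSigmaE Sg) wexp_tor; congr pair; apply: functional_extensionality => x.
  exact: Zmod_mulrn_order.
have := congr1 snd (aut_wexp q (proj1 Sg)); rewrite wexp_order aut_wone wexp_snd /=.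
move=> /esym /matrixP phig2; apply/matrixP => i j; move/eqP: (phig2 i j).
by rewrite mulmxnE !mxE mulrn_eq0 eqn0Ngt q_gt0 => /eqP.
Qed.

Definition restr s := (phi (tor s)).1.

Lemma aut_tor s : fin_supp s -> phi (tor s) = tor (restr s).
Proof. by move=> fs; apply: inSigmaE; apply: aut_inSigma. Qed.

Lemma fin_supp_restr s : fin_supp s -> fin_supp (restr s).
Proof. by move=> fs; case: (aut_inSigma (g := tor s)). Qed.

Lemma restrD s t : fin_supp s -> fin_supp t -> restr (s \+ t) = restr s \+ restr t.
Proof.
move=> fs ft; case: phi_aut => _ phiM _ _.
have fst := fin_suppD fs ft.
by apply: tor_inj; rewrite -wmul_tor -!aut_tor // -phiM // wmul_tor.
Qed.

Lemma restrMn s N : fin_supp s -> restr (fun x => s x *+ N) = fun x => restr s x *+ N.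
Proof.
move=> fs; have fsN := fin_supp_comp (f := (@GRing.natmul _)^~ N) (mul0rn _ N) fs.
by apply: tor_inj; rewrite -!wexp_tor -!aut_tor // -wexp_tor aut_wexp.
Qed.

Lemma reid_oneP :
  reid_one phi <-> forall s, fin_supp s -> exists2 a, fin_supp a & s = a \- restr a.
Proof.
split=> [reid s fs | onto g1 g2 S1 S2].
  have [h Sh] :=
    reid (tor s) (wone q k) (proj2 (inSigma_tor s) fs) (conj (inW_wone q k) erefl).
  rewrite (inSigmaE Sh) aut_tor; last by case: Sh.
  rewrite wmulg1 winv_tor wmul_tor => /tor_inj ->.
  by exists h.1; case: Sh.
have [a fa def_s] := onto (g1.1 \- g2.1) (fin_suppB (proj1 S1) (proj1 S2)).
exists (tor a) => //; rewrite (inSigmaE S1) (inSigmaE S2) aut_tor //.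
rewrite wmul_tor winv_tor wmul_tor; congr pair; apply: functional_extensionality => x /=.
by rewrite addrAC -[_ - restr a x]/((a \- restr a) x) -def_s /= subrK.
Qed.

End Automorphism.

Section Reduction.

Variables (q d k : nat) (phi : wr q k -> wr q k) (phid : wr d k -> wr d k).
Hypotheses (q_gt0 : (0 < q)%N) (d_dvd_q : (d %| q)%N).
Hypothesis phid_aut : is_aut phid.
Hypothesis phi_proj : forall g, inW g -> proj d (phi g) = phid (proj d g).
Implicit Types s : Zk k -> Zmod q.

Lemma restr_proj s : fin_supp s -> restr phid (redmod d \o s) = redmod d \o restr phi s.
Proof. by move=> fs; rewrite /restr -[tor _]/(proj d (tor s)) -phi_proj. Qed.

Lemma coboundary_mod s : reid_one phid -> fin_supp s ->
  exists2 a, fin_supp a & forall x, (d %| (s x - (a x - restr phi a x))%R)%N.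
Proof.
move=> reid_d fs; have d_gt0 : (0 < d)%N := dvdn_gt0 q_gt0 d_dvd_q.
have [h fh def_s] := (reid_oneP d_gt0 phid_aut).1 reid_d _ (fin_supp_comp (redmod0 q d) fs).
pose a x : Zmod q := inZp (h x).
have fa : fin_supp a.
  by apply: (fin_supp_comp (f := inZp)) fh; apply: val_inj => /=; rewrite mod0n.
have red_a : redmod d \o a = h.
  by apply: functional_extensionality => x; rewrite /= redmod_inZp.
exists a => // x; rewrite -redmod_eq0 // !redmodB //.
have /(congr1 (@^~ x)) := restr_proj fa; rewrite red_a /= => <-.
by rewrite [redmod d (s x)](congr1 (@^~ x) def_s) /= -red_a /= subrr.
Qed.

End Reduction.

Section ProductModulus.

Variables (n m k : nat) (phi : wr (n * m) k -> wr (n * m) k) (phin : wr n k -> wr n k).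
Hypotheses (n_gt0 : (0 < n)%N) (m_gt0 : (0 < m)%N).
Hypotheses (phi_aut : is_aut phi) (phin_aut : is_aut phin).
Hypothesis phi_proj : forall g, inW g -> proj n (phi g) = phin (proj n g).
Hypothesis reid_n : reid_one phin.

Let nm_gt0 : (0 < n * m)%N. Proof. by rewrite muln_gt0 n_gt0. Qed.

Lemma coboundary_of_dvd (t : Zk k -> Zmod (n * m)) : fin_supp t ->
  (forall x, (m %| t x)%N) -> exists2 c, fin_supp c & t = c \- restr phi c.
Proof.
move=> ft dvd_m; pose y x : Zmod (n * m) := inZp (t x %/ m).
have fy : fin_supp y.
  apply: (fin_supp_comp (f := fun v : Zmod (n * m) => inZp (v %/ m))) ft.
  by apply: val_inj => /=; rewrite div0n mod0n.
have [b fb dvd_n] :=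
  coboundary_mod nm_gt0 (dvdn_mulr m (dvdnn n)) phin_aut phi_proj reid_n fy.
exists (fun x => b x *+ m).
  by apply: (fin_supp_comp (f := (@GRing.natmul _)^~ m)) fb; rewrite mul0rn.
rewrite restrMn //; apply: functional_extensionality => x /=.
rewrite -(Zmod_divnK n_gt0 m_gt0 (dvd_m x)) -/(y x) -mulrnBl.
by rewrite -[y x](subrK (b x - restr phi b x)) mulrnDl Zmod_mulrn_eq0 ?add0r.
Qed.

End ProductModulus.

Theorem theorem4p3 (n m k : nat) (hn : (0 < n)%N) (hm : (0 < m)%N) (hk : (0 < k)%N)
  (phi : wr (n * m) k -> wr (n * m) k)
  (phin : wr n k -> wr n k) (phim : wr m k -> wr m k) :
  is_aut phi -> is_aut phin -> is_aut phim ->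
  (forall g, inW g -> proj n (phi g) = phin (proj n g)) ->
  (forall g, inW g -> proj m (phi g) = phim (proj m g)) ->
  reid_one phin -> reid_one phim -> reid_one phi.
Proof.
move=> phi_aut phin_aut phim_aut proj_n proj_m reid_n reid_m.
have nm_gt0 : (0 < n * m)%N by rewrite muln_gt0 hn.
apply/(reid_oneP nm_gt0 phi_aut) => s fs.
have [a fa dvd_m] :=
  coboundary_mod nm_gt0 (dvdn_mull n (dvdnn m)) phim_aut proj_m reid_m fs.
have ft : fin_supp (s \- (a \- restr phi a)).
  by apply: fin_suppB fs (fin_suppB fa (fin_supp_restr nm_gt0 phi_aut fa)).
have [c fc def_t] := coboundary_of_dvd hn hm phi_aut phin_aut proj_n reid_n ft dvd_m.
exists (a \+ c); first exact: fin_suppD.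
rewrite restrD //; apply: functional_extensionality => x /=.
have /(canRL (subrK (a x - restr phi a x))) -> := congr1 (@^~ x) def_t.
by rewrite /= addrC addrACA opprD.
Qed.
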